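(* Let $\mathbb{A}$ be an epistemic Heyting algebra and $a\in\mathbb{A}$. If $[b]\in\mathsf{Min}_i(\mathbb{A}^a)$, then $\lozenge_i(b\wedge a)$ is the unique $i$-minimal element of $\mathbb{A}$ which belongs to $[b]$.
   Context: Fix a set $\mathsf{Ag}$ of agents. A monadic Heyting algebra is a Heyting algebra $\mathbb{L}$ with, for each $i\in\mathsf{Ag}$, monotone unary operations $\lozenge_i,\Box_i$ such that for all $a,b$: $a\leq\lozenge_i a$; $\Box_i a\leq a$; $\lozenge_i(a\vee b)\leq\lozenge_i a\vee\lozenge_i b$; $\Box_i(a\to b)\leq\Box_i a\to\Box_i b$; $\lozenge_i a\leq\Box_i\lozenge_i a$; $\lozenge_i\Box_i a\leq\Box_i a$; $\Box_i(a\to b)\leq\lozenge_i a\to\lozenge_i b$; $\lozenge_i\bot\leq\bot$; $\top\leq\Box_i\top$. An epistemic Heyting algebra is a finite monadic Heyting algebra with $\lozenge_i a\vee\neg\lozenge_i a=\top$ for all $i,a$. An element $c$ is $i$-minimal if $c\neq\bot$, $\lozenge_i c=c$, and whenever $d<c$ and $\lozenge_i d=d$ then $d=\bot$; $\mathsf{Min}_i(\cdot)$ is the set of $i$-minimal elements. The pseudo-quotient algebra $\mathbb{A}^a$: $b\cong_a c$ iff $b\wedge a=c\wedge a$; carrier the quotient Heyting algebra $\mathbb{L}/{\cong_a}$ with classes $[c]$ ($[b]\leq[c]$ iff $b\wedge a\leq c\wedge a$); $\lozenge^a_i[b]=[\lozenge_i(b\wedge a)]$, $\Box^a_i[b]=[\Box_i(a\to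 b)]$; $i$-minimality in $\mathbb{A}^a$ is w.r.t. $\lozenge^a_i$. *)

From HB Require Import structures.
From mathcomp Require Import all_boot all_order.
Set Implicit Arguments. Unset Strict Implicit. Unset Printing Implicit Defensive.
Import Order.TTheory.
Local Open Scope order_scope.

Section EHA.
Variables (disp : Order.disp_t) (L : finTBLatticeType disp).
Variable (imp : L -> L -> L).
Variable (Ag : Type).
Variables (dia box : Ag -> L -> L).

Definition heyting_imp : Prop :=
  forall a b c : L, (c <= imp a b) = (c `&` a <= b).

Definition hneg (x : L) : L := imp x \bot.

Definition monadic_heyting : Prop :=
  heyting_imp /\
  forall i : Ag,
  (forall a b : L, a <= b -> dia i a <= dia i b) /\
  (forall a b : L, a <= b -> box i a <= box i b) /\
  (forall a : L, a <= dia i a) /\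
  (forall a : L, box i a <= a) /\
  (forall a b : L, dia i (a `|` b) <= dia i a `|` dia i b) /\
  (forall a b : L, box i (imp a b) <= imp (box i a) (box i b)) /\
  (forall a : L, dia i a <= box i (dia i a)) /\
  (forall a : L, dia i (box i a) <= box i a) /\
  (forall a b : L, box i (imp a b) <= imp (dia i a) (dia i b)) /\
  (dia i \bot <= \bot) /\
  (\top <= box i \top).

(* Finiteness is built into L : finTBLatticeType. *)
Definition epistemic_heyting : Prop :=
  monadic_heyting /\
  forall (i : Ag) (a : L), dia i a `|` hneg (dia i a) = \top.

Definition i_minimal (i : Ag) (c : L) : Prop :=
  [/\ c <> \bot, dia i c = c &
      forall d : L, d < c -> dia i d = d -> d = \bot].

(* Pseudo-quotient A^a, presented on representatives:
   [b] = [c]  iff  b `&` a = c `&` a;  [b] <= [c] iff b `&` a <= c `&` a;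
   dia^a_i [b] = [dia i (b `&` a)];  box^a_i [b] = [box i (imp a b)];
   bottom of the quotient is [\bot]. *)
Definition cong (a b c : L) : Prop := b `&` a = c `&` a.
Definition qle (a b c : L) : Prop := b `&` a <= c `&` a.
Definition qlt (a b c : L) : Prop := qle a b c /\ ~ cong a b c.
Definition qdia (a : L) (i : Ag) (b : L) : L := dia i (b `&` a).
Definition qbox (a : L) (i : Ag) (b : L) : L := box i (imp a b).

Definition q_i_minimal (a : L) (i : Ag) (c : L) : Prop :=
  [/\ ~ cong a c \bot, cong a (qdia a i c) c &
      forall d : L, qlt a d c -> cong a (qdia a i d) d -> cong a d \bot].

End EHA.

From mathcomp Require Import all_boot all_order.
Import Order.TTheory.

Set Implicit Arguments.
Unset Strict Implicit.
Unset Printing Implicit Defensive.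
Local Open Scope order_scope.

(* Let c = dia_i (b /\ a) and let d < c be a fixpoint of dia_i.  Then [d] is
   a fixpoint of the quotient diamond below [b].  If [d] = [b] then c <= d,
   which is absurd; otherwise minimality of [b] gives d /\ a = bot, so d is
   disjoint from b /\ a, hence from c, and d = bot.  Any i-minimal c' with
   [c'] = [b] lies above c and therefore equals it. *)

Section MonadicHeyting.
Variables (disp : Order.disp_t) (L : finTBLatticeType disp) (imp : L -> L -> L).
Variables (Ag : Type) (dia box : Ag -> L -> L).
Hypothesis HM : monadic_heyting imp dia box.
Variable i : Ag.

Lemma le_imp x y z : (z <= imp x y) = (z `&` x <= y).
Proof. exact: HM.1. Qed.

Lemma dia_homo : {homo dia i : x y / x <= y}.
Proof. by case: (HM.2 i). Qed.

Lemma box_homo : {homo box i : x y / x <= y}.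
Proof. by case: (HM.2 i) => _ []. Qed.

Lemma le_dia x : x <= dia i x.
Proof. by case: (HM.2 i) => _ [_ []]. Qed.

Lemma box_le x : box i x <= x.
Proof. by case: (HM.2 i) => _ [_ [_ []]]. Qed.

Lemma dia_le_box_dia x : dia i x <= box i (dia i x).
Proof. by case: (HM.2 i) => _ [_ [_ [_ [_ [_ []]]]]]. Qed.

Lemma dia_box_le x : dia i (box i x) <= box i x.
Proof. by case: (HM.2 i) => _ [_ [_ [_ [_ [_ [_ []]]]]]]. Qed.

Lemma box_imp_le_imp_dia x y : box i (imp x y) <= imp (dia i x) (dia i y).
Proof. by case: (HM.2 i) => _ [_ [_ [_ [_ [_ [_ [_ []]]]]]]]. Qed.

Lemma dia0 : dia i \bot = \bot.
Proof. by apply/eqP; rewrite -lex0; case: (HM.2 i) => _ [_ [_ [_ [_ [_ [_ [_ [_ []]]]]]]]]. Qed.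

Lemma dia_idem x : dia i (dia i x) = dia i x.
Proof.
apply/le_anti; rewrite le_dia andbT.
apply: le_trans (box_le (dia i x)); apply: le_trans (dia_box_le _).
exact: dia_homo (dia_le_box_dia x).
Qed.

Lemma dia_le_fixed d x : dia i d = d -> x <= d -> dia i x <= d.
Proof. by move=> fix_d le_xd; rewrite -fix_d; apply: dia_homo. Qed.

Lemma dia_eq0 x : dia i x = \bot -> x = \bot.
Proof. by move=> dx0; apply/eqP; rewrite -lex0 -dx0 le_dia. Qed.

Lemma fixed_le_box d : dia i d = d -> d <= box i d.
Proof. by move=> fix_d; have := dia_le_box_dia d; rewrite fix_d. Qed.

(* d <= box_i d <= box_i (x -> bot) <= dia_i x -> dia_i bot. *)
Lemma dia_meet_fixed_eq0 d x :
  dia i d = d -> x `&` d = \bot -> dia i x `&` d = \bot.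
Proof.
move=> fix_d xd0; apply/eqP; rewrite -lex0 -dia0 meetC -le_imp.
apply: le_trans (fixed_le_box fix_d) _; apply: le_trans (box_imp_le_imp_dia _ _).
by apply: box_homo; rewrite le_imp meetC xd0.
Qed.

Lemma cong_qdia_fixed a d : dia i d = d -> cong a (qdia dia a i d) d.
Proof.
move=> fix_d; apply/le_anti; rewrite /qdia !lexI !leIr le_dia !andbT /=.
exact: le_trans (leIl _ _) (dia_le_fixed fix_d (leIl _ _)).
Qed.

Lemma i_minimal_qdia a b :
  q_i_minimal dia a i b -> i_minimal dia i (dia i (b `&` a)).
Proof.
case=> + qfix_b qmin_b; rewrite /cong meet0x => b_neq0.
set c := dia i (b `&` a); rewrite /cong /qdia -/c in qfix_b.
split; [by move/dia_eq0 | exact: dia_idem | move=> d lt_dc fix_d].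
have le_da_ba : d `&` a <= b `&` a by rewrite -qfix_b; apply: leI2 (ltW lt_dc) _.
have [da_eq_ba | da_neq_ba] := eqVneq (d `&` a) (b `&` a).
  have le_cd : c <= d by rewrite /c -da_eq_ba; apply: dia_le_fixed fix_d (leIl _ _).
  by have := lt_le_trans lt_dc le_cd; rewrite ltxx.
have da0 : d `&` a = \bot.
  rewrite -(meet0x a); apply: qmin_b; last exact: cong_qdia_fixed.
  by split=> // /eqP; rewrite (negPf da_neq_ba).
have bad0 : b `&` a `&` d = \bot.
  by apply/eqP; rewrite -lex0 -da0 lexI leIr (le_trans (leIl _ _) (leIr _ _)).
by rewrite -(meet_idPr (ltW lt_dc)) /c dia_meet_fixed_eq0.
Qed.

Lemma i_minimal_le_eq c d :
  i_minimal dia i c -> i_minimal dia i d -> d <= c -> d = c.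
Proof.
case=> _ _ min_c [d_neq0 fix_d _] le_dc.
have [//|neq_dc] := eqVneq d c.
by case: d_neq0; apply: min_c; rewrite // lt_neqAle neq_dc.
Qed.

End MonadicHeyting.

Theorem lemma5 (disp : Order.disp_t) (L : finTBLatticeType disp)
  (imp : L -> L -> L) (Ag : Type) (dia box : Ag -> L -> L)
  (HA : epistemic_heyting imp dia box) (a b : L) (i : Ag) :
  q_i_minimal dia a i b ->
  [/\ i_minimal dia i (dia i (b `&` a)),
      cong a (dia i (b `&` a)) b &
      forall c : L, i_minimal dia i c -> cong a c b -> c = dia i (b `&` a)].
Proof.
case: HA => HM _ qmin_b; have [_ qfix_b _] := qmin_b.
have min_c := i_minimal_qdia HM qmin_b.
split=> // c min_c' cong_cb; apply/esym/(i_minimal_le_eq min_c' min_c).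
have [_ fix_c _] := min_c'.
apply: (dia_le_fixed HM fix_c).
by rewrite /cong in cong_cb; rewrite -cong_cb leIl.
Qed.
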